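(* Let $U:\mathbb{R}\to\mathbb{R}$ be a twice continuously differentiable potential energy function with several stable solutions (local minimizers), let $y_{+}$ denote the largest stable solution of $U$, and assume that $y_{+}$ is the unique global minimizer of $U$, i.e. $U(y_{+})<U(y)$ for all $y\neq y_{+}$. Let $D>0$ be a constant coupling strength and $x_{\max}>0$. Then there is no pot-shaped stationary solution, i.e. there is no twice differentiable function $y:[-x_{\max},x_{\max}]\to\mathbb{R}$ satisfying $$0=-U'(y(x))+D\,y''(x)\quad\text{for } x\in(-x_{\max},x_{\max}),\qquad y(\pm x_{\max})=y_{+},$$ together with $y(0)<y(\pm x_{\max})$ and $y'(x)\ge 0$ for all $x\in(0,x_{\max})$.
   Context: The setting is the spatially-coupled dynamical system $\partial y/\partial t=-U'(y)+D\,\partial^{2}y/\partial x^{2}$ for $x\in(-x_{\max},x_{\max})$, $t\ge 0$, with boundary condition $y(\pm x_{\max},t)=y_{+}$, where the coupling function $D>0$ is a constant independent of $y$. A stationary solution is a function $y(x)$ satisfying $0=-U'(y)+D\,y''$ on $(-x_{\max},x_{\max})$ with $y(\pm x_{\max})=y_{+}$. A stable solution of $U$ means a local minimizer of $U$. A stationary solution $y(x)$ is called pot-shaped if (i) $y(0)<y(\pm x_{\max})$ and (ii) $dy/dx\ge 0$ for $x>0$. *)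

From Stdlib Require Import Reals.
Open Scope R_scope.

Definition is_local_min (U : R -> R) (a : R) : Prop :=
  exists d, 0 < d /\ forall z, Rabs (z - a) < d -> U a <= U z.

Definition is_C2 (U dU ddU : R -> R) : Prop :=
  (forall x, derivable_pt_lim U x (dU x)) /\
  (forall x, derivable_pt_lim dU x (ddU x)) /\
  continuity ddU.

Definition continuous_on_closed (f : R -> R) (a b : R) : Prop :=
  forall x, a <= x <= b ->
    forall eps, 0 < eps -> exists delta, 0 < delta /\
      forall z, a <= z <= b -> Rabs (z - x) < delta -> Rabs (f z - f x) < eps.

(* Multiplying the stationary equation by y' shows that the mechanical energy
   D/2 y'^2 - U(y) is constant on (-xmax, xmax).  If y(0) < y(±xmax) = y+, then
   y has an interior minimum m with y'(m) = 0 and y(m) < y+, so the energy equals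
   -U(y(m)) < -U(y+).  Near xmax, however, y is close to y+, so by continuity of
   U the energy there is at least -U(y(x)) > -U(y(m)). *)
From Stdlib Require Import Reals Lra.
Open Scope R_scope.

Lemma continuous_on_closed_approach_left (f : R -> R) (a c b eps : R) :
  a < c < b -> continuous_on_closed f a b -> 0 < eps ->
  exists x, a < x < c /\ Rabs (f x - f a) < eps.
Proof.
  intros Hacb Hf Heps.
  destruct (Hf a ltac:(lra) eps Heps) as [delta [Hdelta Hnear]].
  set (x := a + Rmin delta (c - a) / 2).
  assert (Hmin : 0 < Rmin delta (c - a) <= delta /\ Rmin delta (c - a) <= c - a).
  { repeat split; [apply Rmin_pos; lra | apply Rmin_l | apply Rmin_r]. }
  exists x; split; [unfold x; lra |].
  apply Hnear; unfold x; [lra |]. rewrite Rabs_right; lra.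
Qed.

Lemma continuous_on_closed_approach_right (f : R -> R) (a c b eps : R) :
  a < c < b -> continuous_on_closed f a b -> 0 < eps ->
  exists x, c < x < b /\ Rabs (f x - f b) < eps.
Proof.
  intros Hacb Hf Heps.
  destruct (Hf b ltac:(lra) eps Heps) as [delta [Hdelta Hnear]].
  set (x := b - Rmin delta (b - c) / 2).
  assert (Hmin : 0 < Rmin delta (b - c) <= delta /\ Rmin delta (b - c) <= b - c).
  { repeat split; [apply Rmin_pos; lra | apply Rmin_l | apply Rmin_r]. }
  exists x; split; [unfold x; lra |].
  apply Hnear; unfold x; [lra |]. rewrite Rabs_left; lra.
Qed.

Lemma interior_min_critical (f df : R -> R) (a c b : R) :
  a < c < b -> continuous_on_closed f a b ->
  (forall x, a < x < b -> derivable_pt_lim f x (df x)) ->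
  f c < f a -> f c < f b ->
  exists m, a < m < b /\ f m <= f c /\ df m = 0.
Proof.
  intros Hacb Hf Hdf Hca Hcb.
  destruct (continuous_on_closed_approach_left f a c b (f a - f c) Hacb Hf
              ltac:(lra)) as [a' [Ha' Hfa']].
  destruct (continuous_on_closed_approach_right f a c b (f b - f c) Hacb Hf
              ltac:(lra)) as [b' [Hb' Hfb']].
  apply Rabs_def2 in Hfa', Hfb'.
  assert (Hcont : forall x, a' <= x <= b' -> continuity_pt f x).
  { intros x Hx. apply derivable_continuous_pt.
    exists (df x). apply Hdf. lra. }
  destruct (continuity_ab_min f a' b' ltac:(lra) Hcont) as [m [Hmin Hm]].
  assert (Hmc : f m <= f c) by (apply Hmin; lra).
  assert (Hm_int : a' < m < b').
  { destruct Hm as [[Hl | Hl] [Hr | Hr]]; subst; lra. }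
  exists m; repeat split; [lra | lra | exact Hmc |].
  apply (deriv_minimum f a' b' m (exist _ (df m) (Hdf m ltac:(lra)))); try lra.
  intros x Hx1 Hx2. apply Hmin. lra.
Qed.

Section EnergyConservation.

Variables (U dU y dy ddy : R -> R) (D a b : R).
Hypothesis HU : forall z, derivable_pt_lim U z (dU z).
Hypothesis Hy : forall x, a < x < b ->
  derivable_pt_lim y x (dy x) /\ derivable_pt_lim dy x (ddy x).
Hypothesis Hstationary : forall x, a < x < b -> 0 = - dU (y x) + D * ddy x.

Definition energy (x : R) : R := D / 2 * (dy x * dy x) - U (y x).

Lemma energy_derivative_zero (x : R) :
  a < x < b -> derivable_pt_lim energy x 0.
Proof.
  intros Hx. destruct (Hy x Hx) as [Hdy Hddy].
  assert (Hkin : derivable_pt_lim (fun t => D / 2 * (dy t * dy t)) x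
                   (D / 2 * (ddy x * dy x + dy x * ddy x))).
  { apply (derivable_pt_lim_scal (fun t => dy t * dy t)).
    apply derivable_pt_lim_mult; exact Hddy. }
  assert (Hpot : derivable_pt_lim (fun t => U (y t)) x (dU (y x) * dy x)).
  { apply (derivable_pt_lim_comp y U); [exact Hdy | apply HU]. }
  replace 0 with (D / 2 * (ddy x * dy x + dy x * ddy x) - dU (y x) * dy x).
  - exact (derivable_pt_lim_minus _ _ x _ _ Hkin Hpot).
  - specialize (Hstationary x Hx).
    replace (dU (y x)) with (D * ddy x) by lra. field.
Qed.

Lemma energy_constant (u v : R) :
  a < u < b -> a < v < b -> energy u = energy v.
Proof.
  assert (Hlt : forall u v, a < u < b -> a < v < b -> u < v ->
                  energy u = energy v).
  { intros u' v' Hu Hv Huv.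
    destruct (MVT_cor2 energy (fun _ => 0) u' v' Huv) as [c [Hmvt _]].
    - intros c Hc. apply energy_derivative_zero. lra.
    - lra. }
  intros Hu Hv. destruct (total_order_T u v) as [[H | H] | H].
  - exact (Hlt u v Hu Hv H).
  - now subst.
  - symmetry. exact (Hlt v u Hv Hu H).
Qed.

End EnergyConservation.

Theorem theorem1 (U dU ddU : R -> R) (yplus D xmax : R)
  (hU : is_C2 U dU ddU)
  (hseveral : exists a b, a <> b /\ is_local_min U a /\ is_local_min U b)
  (hyplus_stable : is_local_min U yplus)
  (hyplus_largest : forall a, is_local_min U a -> a <= yplus)
  (hglobal : forall z, z <> yplus -> U yplus < U z)
  (hD : 0 < D) (hxmax : 0 < xmax) :
  ~ (exists y dy ddy : R -> R,
       continuous_on_closed y (- xmax) xmax /\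
       (forall x, - xmax < x < xmax ->
          derivable_pt_lim y x (dy x) /\ derivable_pt_lim dy x (ddy x)) /\
       (forall x, - xmax < x < xmax -> 0 = - dU (y x) + D * ddy x) /\
       y (- xmax) = yplus /\ y xmax = yplus /\
       y 0 < y (- xmax) /\ y 0 < y xmax /\
       (forall x, 0 < x < xmax -> 0 <= dy x)).
Proof.
  intros [y [dy [ddy [Hcont [Hy [Hstat [_ [Hright [H0l [H0r _]]]]]]]]]].
  destruct hU as [HU _].
  destruct (interior_min_critical y dy (- xmax) 0 xmax ltac:(lra) Hcont
              (fun x Hx => proj1 (Hy x Hx)) H0l H0r) as [m [Hm [Hym Hdym]]].
  assert (HUm : U yplus < U (y m)) by (apply hglobal; lra).
  assert (HUcont : continuity_pt U yplus).
  { apply derivable_continuous_pt. exists (dU yplus). apply HU. }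
  destruct (HUcont (U (y m) - U yplus) ltac:(lra)) as [alpha [Halpha HUnear]].
  destruct (continuous_on_closed_approach_right y (- xmax) 0 xmax alpha
              ltac:(lra) Hcont Halpha) as [x [Hx Hyx]].
  rewrite Hright in Hyx.
  assert (HUx : U (y x) < U (y m)).
  { destruct (Req_dec (y x) yplus) as [Heq | Hneq]; [rewrite Heq; lra |].
    specialize (HUnear (y x) (conj (conj I (not_eq_sym Hneq)) Hyx)).
    simpl in HUnear. unfold R_dist in HUnear. apply Rabs_def2 in HUnear. lra. }
  pose proof (energy_constant U dU y dy ddy D (- xmax) xmax HU Hy Hstat x m
                ltac:(lra) ltac:(lra)) as HE.
  unfold energy in HE. rewrite Hdym in HE.
  assert (0 <= D / 2 * (dy x * dy x)) by (apply Rmult_le_pos; [lra | apply Rle_0_sqr]).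
  lra.
Qed.
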